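(* Let $G$ and $G'$ be finite undirected graphs with initial node features $x_v$ (for $v\in V(G)$) and $x'_{v'}$ (for $v'\in V(G')$), and suppose that the one-dimensional Weisfeiler–Lehman test (1-WL), initialized with colors given by the node features, does not distinguish $G$ and $G'$, i.e. at every iteration the multisets of node colors of $G$ and $G'$ coincide. Consider any message-passing GNN with layers \[ h_v^{(\ell+1)}=\sigma\Bigl(\mathrm{AGG}\bigl\{\!\!\{\phi_\ell(h_v^{(\ell)},h_u^{(\ell)},e_{uv}) : u\in\mathcal N(v)\}\!\!\}\bigr)\Bigr),\qquad h_v^{(0)}=x_v, \] where $\mathrm{AGG}$ is any permutation-invariant function of multisets, $\phi_\ell,\sigma$ are arbitrary functions, and the edge feature is the degree-based Forman curvature $e_{uv}=F(u,v)=4-\deg(u)-\deg(v)$. Then for every number of layers $L\ge 0$, the multisets $\{\!\!\{h_v^{(L)}:v\in V(G)\}\!\!\}$ and $\{\!\!\{h_{v'}^{(L)}:v'\in V(G')\}\!\!\}$ coincide; in particular, no such GNN (with any permutation-invariant graph-level readout) distinguishes $G$ and $G'$. That is, such GNNs are no more expressive than 1-WL.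
   Context: 1-WL: starting from initial colors, each iteration replaces the color of node $v$ by an injective encoding of the pair (current color of $v$, multiset of current colors of neighbors of $v$). Two graphs are distinguished by 1-WL if at some iteration their multisets of node colors differ. $\mathcal N(v)$ is the set of neighbors of $v$, and $\{\!\!\{\cdot\}\!\!\}$ denotes a multiset. *)

From mathcomp Require Import all_boot all_order all_algebra.
From Stdlib Require Import Permutation.
Set Implicit Arguments. Unset Strict Implicit. Unset Printing Implicit Defensive.
Import GRing.Theory Num.Theory.

Definition undirected (V : finType) (e : rel V) : Prop :=
  symmetric e /\ irreflexive e.

Definition deg (V : finType) (e : rel V) (v : V) : nat := #|[pred u | e v u]|.

Definition forman (V : finType) (e : rel V) (u v : V) : int :=
  (4%:Z - (deg e u)%:Z - (deg e v)%:Z)%R.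

(* The multiset of messages is given as a sequence (listing neighbours in the
   order of enum V); agg is required to be permutation invariant in the theorem. *)
Fixpoint gnn (V : finType) (e : rel V) (T M A : Type) (x : V -> T)
    (phi : nat -> T -> T -> int -> M) (agg : seq M -> A) (sigma : A -> T)
    (l : nat) : V -> T :=
  match l with
  | 0 => x
  | l'.+1 => fun v =>
      sigma (agg [seq phi l' (gnn e x phi agg sigma l' v)
                             (gnn e x phi agg sigma l' u) (forman e u v)
                 | u <- enum V & e v u])
  end.

(* 1-WL on a graph W with initial colors c, presented through the equivalence
   "a and b have the same color at iteration k" (this is exactly what an
   injective encoding of (color, multiset of neighbour colors) yields):
   same color at k+1 iff same color at k and, for every color class d at
   iteration k, the same number of neighbours in that class. *)
Fixpoint wl_same (W : finType) (e : rel W) (X : eqType) (c : W -> X) (k : nat)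
    : rel W :=
  match k with
  | 0 => fun a b => c a == c b
  | k'.+1 => fun a b =>
      wl_same e c k' a b &&
      [forall d, #|[pred u | e a u & wl_same e c k' u d]|
                 == #|[pred u | e b u & wl_same e c k' u d]|]
  end.

(* Disjoint union of two graphs, so that both are colored by one common
   (injective) encoding. *)
Definition union_adj (V V' : finType) (e : rel V) (e' : rel V') : rel (V + V') :=
  fun a b => match a, b with
             | inl v, inl u => e v u
             | inr v, inr u => e' v u
             | _, _ => false
             end.

Definition union_col (V V' : finType) (X : Type) (x : V -> X) (x' : V' -> X)
    (a : V + V') : X :=
  match a with inl v => x v | inr v => x' v end.

(* 1-WL does not distinguish (G,x) and (G',x'): at every iteration k, for every
   color (class of a node d of either graph), both graphs have the same number of
   nodes with that color, i.e. the multisets of node colors coincide. *)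
Definition wl_indist (V V' : finType) (e : rel V) (e' : rel V') (X : eqType)
    (x : V -> X) (x' : V' -> X) : Prop :=
  forall (k : nat) (d : V + V'),
    #|[pred v : V | wl_same (union_adj e e') (union_col x x') k (inl v) d]|
    = #|[pred v : V' | wl_same (union_adj e e') (union_col x x') k (inr v) d]|.

From mathcomp Require Import all_boot all_order all_algebra.
From Stdlib Require Import Permutation.
Set Implicit Arguments. Unset Strict Implicit. Unset Printing Implicit Defensive.

(* Work on the disjoint union of G and G'. By induction on k, two nodes with the
   same 1-WL colour at round k+1 have the same degree and the same GNN feature
   after k layers: their neighbour lists have equal counts in every round-k
   colour class, so they can be matched up neighbour by neighbour inside
   colour classes, which makes the two message lists permutations of each
   other. The extra WL round pays for the degrees in the Forman curvature.
   The same matching, applied to the node lists of G and G', which have equal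
   colour counts by assumption, gives the theorem. The graphs need not be
   undirected. *)

Lemma Permutation_perm_eq (T : eqType) (s t : seq T) : Permutation s t -> perm_eq s t.
Proof.
elim=> [|a s1 t1 _| a b l| s1 s2 s3 _ IH12 _ IH23] //.
- by rewrite perm_cons.
- by apply/permP => p /=; rewrite addnCA.
- exact: seq.perm_trans IH12 IH23.
Qed.

Lemma Permutation_map_classes (W : eqType) (R : rel W) (Y : Type) (f : W -> Y) :
    equivalence_rel R -> (forall u v, R u v -> f u = f v) ->
  forall s t, (forall d, count (R^~ d) s = count (R^~ d) t) ->
  Permutation (map f s) (map f t).
Proof.
move=> eqR fR; elim=> [|a s IH] t cnt_st.
  by case: t cnt_st => // b t /(_ b); rewrite /= (eqR b b b).1.
have [b tb Rba] : exists2 b, b \in t & R b a.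
  by apply/hasP; rewrite has_count -cnt_st /= (eqR a a a).1.
case/splitPr: tb cnt_st => t1 t2 cnt_st.
have {}cnt_st d : count (R^~ d) s = count (R^~ d) (t1 ++ t2).
  move/eqP: (cnt_st d); rewrite /= !count_cat /= ((eqR b a d).2 Rba).
  by rewrite addnCA eqn_add2l => /eqP.
rewrite /= map_cat /= (fR b a Rba).
apply: Permutation_trans (Permutation_middle _ _ _).
(* Stdlib's [app] and MathComp's [cat] are convertible. *)
change (app ?l1 ?l2) with (cat l1 l2).
by constructor; rewrite -map_cat; exact: IH.
Qed.

Lemma card_count_enum (W : finType) (p : pred W) : #|p| = count p (enum W).
Proof. by rewrite enumT cardE /enum_mem size_filter. Qed.

Lemma enum_sum (V V' : finType) :
  enum {: V + V'} = [seq inl x | x <- enum V] ++ [seq inr y | y <- enum V'].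
Proof. by rewrite !enumT [in LHS]unlock. Qed.

Definition neighbours (W : finType) (E : rel W) (a : W) : seq W :=
  [seq u <- enum W | E a u].

Lemma deg_neighbours (W : finType) (E : rel W) (a : W) :
  deg E a = size (neighbours E a).
Proof. by rewrite /deg card_count_enum size_filter. Qed.

Lemma count_neighbours (W : finType) (E : rel W) (p : pred W) (a : W) :
  count p (neighbours E a) = #|[pred u | E a u & p u]|.
Proof.
rewrite card_count_enum /neighbours count_filter.
by apply: eq_count => u; rewrite /= andbC.
Qed.

Lemma gnnS (W : finType) (E : rel W) (T M A : Type) (c : W -> T)
    (phi : nat -> T -> T -> int -> M) (agg : seq M -> A) (sigma : A -> T) k a :
  gnn E c phi agg sigma k.+1 a =
  sigma (agg [seq phi k (gnn E c phi agg sigma k a) (gnn E c phi agg sigma k u)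
                  (forman E u a) | u <- neighbours E a]).
Proof. by []. Qed.

Section UnionGraph.

Variables (V V' : finType) (e : rel V) (e' : rel V').

Lemma neighbours_inl v :
  neighbours (union_adj e e') (inl v) = map inl (neighbours e v).
Proof. by rewrite /neighbours enum_sum filter_cat !filter_map filter_pred0 cats0. Qed.

Lemma neighbours_inr v :
  neighbours (union_adj e e') (inr v) = map inr (neighbours e' v).
Proof. by rewrite /neighbours enum_sum filter_cat !filter_map filter_pred0. Qed.

Lemma deg_inl v : deg (union_adj e e') (inl v) = deg e v.
Proof. by rewrite !deg_neighbours neighbours_inl size_map. Qed.

Lemma deg_inr v : deg (union_adj e e') (inr v) = deg e' v.
Proof. by rewrite !deg_neighbours neighbours_inr size_map. Qed.

Variables (T M A : Type) (x : V -> T) (x' : V' -> T).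
Variables (phi : nat -> T -> T -> int -> M) (agg : seq M -> A) (sigma : A -> T).

Lemma gnn_union_inl k v :
  gnn (union_adj e e') (union_col x x') phi agg sigma k (inl v) =
  gnn e x phi agg sigma k v.
Proof.
elim: k v => [//|k IH] v; rewrite !gnnS neighbours_inl -map_comp IH.
by congr (sigma (agg _)); apply: eq_map => u /=; rewrite IH /forman !deg_inl.
Qed.

Lemma gnn_union_inr k v :
  gnn (union_adj e e') (union_col x x') phi agg sigma k (inr v) =
  gnn e' x' phi agg sigma k v.
Proof.
elim: k v => [//|k IH] v; rewrite !gnnS neighbours_inr -map_comp IH.
by congr (sigma (agg _)); apply: eq_map => u /=; rewrite IH /forman !deg_inr.
Qed.

End UnionGraph.

Section WeisfeilerLehman.

Variables (W : finType) (E : rel W) (T : eqType) (c : W -> T).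

Lemma wl_same_equiv k : equivalence_rel (wl_same E c k).
Proof.
elim: k => [|k IH] a b d /=; first by split=> // /eqP ->.
split; first by rewrite (IH d d d).1; apply/forallP.
case/andP=> ab /forallP cnt_ab; rewrite ((IH a b d).2 ab); congr (_ && _).
by apply: eq_forallb => z; rewrite (eqP (cnt_ab z)).
Qed.

Lemma wl_same_neighbour_count k a b : wl_same E c k.+1 a b ->
  forall d, count (wl_same E c k ^~ d) (neighbours E a) =
            count (wl_same E c k ^~ d) (neighbours E b).
Proof. by case/andP=> _ /forallP cnt_ab d; rewrite !count_neighbours; apply/eqP. Qed.

Lemma wl_same_deg k a b : wl_same E c k.+1 a b -> deg E a = deg E b.
Proof.
move=> /wl_same_neighbour_count cnt_ab; rewrite !deg_neighbours.
have := Permutation_map_classes (f := fun=> tt) (wl_same_equiv k)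
  (fun _ _ _ => erefl) cnt_ab.
by move/Permutation_perm_eq/perm_size; rewrite !size_map.
Qed.

Variables (M A : Type) (phi : nat -> T -> T -> int -> M).
Variables (agg : seq M -> A) (sigma : A -> T).
Hypothesis agg_perm : forall s t, Permutation s t -> agg s = agg t.

Lemma gnn_wl_same k a b :
  wl_same E c k.+1 a b -> gnn E c phi agg sigma k a = gnn E c phi agg sigma k b.
Proof.
elim: k a b => [|k IH] a b ab; first by case/andP: ab => /eqP.
have forman_ab u : forman E u a = forman E u b by rewrite /forman (wl_same_deg ab).
have [ab' _] := andP ab.
rewrite !gnnS (IH a b ab'); under eq_map do rewrite forman_ab.
congr sigma; apply/agg_perm/(Permutation_map_classes (wl_same_equiv k.+1)).
- by move=> u v uv; rewrite /forman (IH u v uv) (wl_same_deg uv).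
- exact: wl_same_neighbour_count.
Qed.

End WeisfeilerLehman.

Unset Implicit Arguments.
Theorem theorem4p1 (V V' : finType) (e : rel V) (e' : rel V')
  (T : eqType) (M A : Type) (x : V -> T) (x' : V' -> T)
  (phi : nat -> T -> T -> int -> M) (agg : seq M -> A) (sigma : A -> T) :
  undirected e -> undirected e' ->
  (forall s t : seq M, Permutation s t -> agg s = agg t) ->
  wl_indist e e' x x' ->
  forall L : nat,
    perm_eq [seq gnn e x phi agg sigma L v | v <- enum V]
            [seq gnn e' x' phi agg sigma L v | v <- enum V'].
Proof.
move=> _ _ agg_perm wl_eq L.
set E := union_adj e e'; set c := union_col x x'.
have -> : [seq gnn e x phi agg sigma L v | v <- enum V] =
          map (gnn E c phi agg sigma L) (map inl (enum V)).
  by rewrite -[in RHS]map_comp; apply: eq_map => v /=; rewrite gnn_union_inl.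
have -> : [seq gnn e' x' phi agg sigma L v | v <- enum V'] =
          map (gnn E c phi agg sigma L) (map inr (enum V')).
  by rewrite -[in RHS]map_comp; apply: eq_map => v /=; rewrite gnn_union_inr.
apply/Permutation_perm_eq/(Permutation_map_classes (wl_same_equiv E c L.+1)).
- exact: gnn_wl_same.
- by move=> d; have := wl_eq L.+1 d; rewrite !card_count_enum !count_map.
Qed.
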